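(* Let $K$ be a field of characteristic $0$ with algebraic closure $\bar K$ and $G_K=\operatorname{Gal}(\bar K/K)$, let $V$ be an algebraic variety defined over $K$, let $\mathcal{A}_V=\operatorname{Aut}(V)$ be the group of $\bar K$-automorphisms of $V$, and let $f:V\to V$ be a $\bar K$-endomorphism whose field of moduli is contained in $K$, i.e., for every $\sigma\in G_K$ there is $\varphi_\sigma\in\mathcal{A}_V$ with $f^\sigma=f^{\varphi_\sigma}$. Let $\mathcal{A}_f=\{\alpha\in\mathcal{A}_V: f^\alpha=f\}$, so that $\varphi_\sigma$ is well defined as an element of $\mathcal{A}_f\backslash\mathcal{A}_V$, giving a map $\varphi:G_K\to\mathcal{A}_f\backslash\mathcal{A}_V$. Let $\mathcal{N}_f$ be the normalizer of $\mathcal{A}_f$ in $\mathcal{A}_V$. Assume that $\mathcal{A}_f$ is finite and that $\mathcal{A}_f$ is defined over $K$ (i.e., $\alpha^\sigma\in\mathcal{A}_f$ for all $\alpha\in\mathcal{A}_f$, $\sigma\in G_K$). Then: (a) $\varphi_\sigma\in\mathcal{N}_f$ for every $\sigma\in G_K$ (for any choice of representative), and $\varphi:G_K\to\mathcal{A}_f\backslash\mathcal{N}_f$ is a $1$-cocycle with values in a group, i.e., $\varphi_{\sigma\tau}\equiv\varphi_\tau\varphi_\sigma^\tau\pmod{\mathcal{A}_f}$ for all $\sigma,\tau\in G_K$; hence it gives an element of $H^1(G_K,\mathcal{A}_f\backslash\mathcal{N}_f)$. (b) The following are equivalent: (1) there is $\gamma\in\mathcal{A}_V$ such that $f^\gamma$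 is defined over $K$ (i.e., $K$ is a field of definition for $f$); (2) there is $\delta\in\mathcal{A}_V$ such that $\varphi_\sigma=\mathcal{A}_f\delta^{-1}\delta^\sigma$ for all $\sigma\in G_K$ (i.e., $\varphi$ is a $G_K$-to-$\mathcal{A}_f\backslash\mathcal{N}_f$ coboundary).
   Context: For $\varphi\in\mathcal{A}_V$, $f^\varphi:=\varphi^{-1}\circ f\circ\varphi$. For $\sigma\in G_K$, $f^\sigma$ and $\varphi^\sigma$ denote the maps obtained by applying $\sigma$ to coefficients; Galois action is written exponentially as a right action, so $(x^\sigma)^\tau=x^{\sigma\tau}$, and $(f^\varphi)^\sigma=(f^\sigma)^{\varphi^\sigma}$. *)

(* Abstract (axiomatic) model of an algebraic variety V over a
   field K, seen through its monoid of Kbar-endomorphisms with the Galois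
   action on coefficients. *)
From HB Require Import structures.
From mathcomp Require Import all_boot all_order all_algebra.
Set Implicit Arguments. Unset Strict Implicit. Unset Printing Implicit Defensive.
Import GRing.Theory.
Local Open Scope ring_scope.

Definition is_subfield (L : fieldType) (K : {pred L}) : Prop :=
  [/\ 1 \in K, {in K &, forall x y, x - y \in K},
      {in K &, forall x y, x * y \in K} & {in K, forall x, x^-1 \in K}].

Definition algebraic_over (L : fieldType) (K : {pred L}) : Prop :=
  forall x : L, exists p : {poly L},
    [/\ p != 0, forall i, p`_i \in K & root p x].

Definition in_GalK (L : fieldType) (K : {pred L}) (s : L -> L) : Prop :=
  [/\ bijective s, {morph s : x y / x + y}, {morph s : x y / x * y},
      s 1 = 1 & {in K, forall x, s x = x}].

(* A variety V defined over K: its Kbar-endomorphisms form a monoid under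
   composition, and G_K acts on them by applying sigma to coefficients
   (exponential right action: (x^s)^t = x^(st), with st = t \o s on L). *)
Record var_over (L : fieldType) (K : {pred L}) := VarOver {
  endo :> Type;
  vcomp : endo -> endo -> endo;           (* vcomp a b = a \o b *)
  vid : endo;
  vact : endo -> (L -> L) -> endo;
  compA : forall a b c, vcomp a (vcomp b c) = vcomp (vcomp a b) c;
  comp1e : forall a, vcomp vid a = a;
  compe1 : forall a, vcomp a vid = a;
  gactM : forall s a b, in_GalK K s -> vact (vcomp a b) s = vcomp (vact a s) (vact b s);
  gact1 : forall s, in_GalK K s -> vact vid s = vid;
  gact_id : forall a, vact a id = a;
  gactA : forall s t a, in_GalK K s -> in_GalK K t -> vact (vact a s) t = vact a (t \o s)
}.

Arguments vcomp {L K v} : rename.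
Arguments vact {L K v} : rename.
Arguments vid {L K} v : rename.

Section VarDefs.
Variables (L : fieldType) (K : {pred L}) (V : var_over K).

Definition aut_inv_pair (a ai : V) : Prop := vcomp a ai = vid V /\ vcomp ai a = vid V.

Definition is_aut (a : V) : Prop := exists ai, aut_inv_pair a ai.

Definition conjE (f a g : V) : Prop :=
  exists ai, aut_inv_pair a ai /\ g = vcomp ai (vcomp f a).

Definition in_Af (f a : V) : Prop := is_aut a /\ conjE f a f.

Definition in_Nf (f p : V) : Prop :=
  exists pi, aut_inv_pair p pi /\
    forall a, in_Af f a <-> in_Af f (vcomp pi (vcomp a p)).

Definition finite_set (P : V -> Prop) : Prop :=
  exists n (g : 'I_n -> V), forall a, P a -> exists i, g i = a.

Definition defined_over (f : V) : Prop :=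
  forall s, in_GalK K s -> vact f s = f.

End VarDefs.

(* Everything follows from a small calculus of the conjugation f |-> f^p = p^-1 f p:
   it is a right action of A_V (f^(pq) = (f^p)^q), it commutes with the Galois action
   ((f^p)^s = (f^s)^(p^s)), and two automorphisms conjugating f to the same map differ
   by a left factor in A_f.  For (a), phi_(st) and phi_t phi_s^t both conjugate f to
   f^(st); moreover A_(f^p) = p^-1 A_f p while A_(f^s) = A_f^s = A_f because A_f is
   defined over K, so phi_s normalizes A_f.  For (b), if h = f^g is fixed by G_K then
   g (g^-1)^s conjugates f to f^s, hence agrees with phi_s modulo A_f; conversely, if
   phi_s = a d^-1 d^s then h = f^(d^-1) and h^s are both conjugated to f^s by d^s. *)
From Stdlib Require Import FunctionalExtensionality.
From Pilot Require Import Defs.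
From HB Require Import structures.
From mathcomp Require Import all_boot all_order all_algebra.
Set Implicit Arguments. Unset Strict Implicit. Unset Printing Implicit Defensive.
Import GRing.Theory.
Local Open Scope ring_scope.

Section GaloisGroup.
Variables (L : fieldType) (K : {pred L}).

Lemma in_GalK_comp s t : in_GalK K s -> in_GalK K t -> in_GalK K (t \o s).
Proof.
move=> [bs ads ms s1 sK] [bt adt mt t1 tK]; split.
- exact: bij_comp.
- by move=> x y /=; rewrite ads adt.
- by move=> x y /=; rewrite ms mt.
- by rewrite /= s1 t1.
- by move=> x xK /=; rewrite sK ?tK.
Qed.

Lemma in_GalK_inv s :
  in_GalK K s -> exists2 s', in_GalK K s' & s' \o s = id /\ s \o s' = id.
Proof.
move=> [[s' sK s'K] ads ms s1 sKid]; exists s'; last first.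
  by split; apply: functional_extensionality => x /=; rewrite ?sK ?s'K.
split; first by exists s.
- by move=> x y; apply: (can_inj sK); rewrite s'K ads !s'K.
- by move=> x y; apply: (can_inj sK); rewrite s'K ms !s'K.
- by apply: (can_inj sK); rewrite s1 s'K.
- by move=> x xK; apply: (can_inj sK); rewrite s'K sKid.
Qed.

End GaloisGroup.

Section Conjugation.
Variables (L : fieldType) (K : {pred L}) (V : var_over K).
Implicit Types (a ai b p pi q f g h x : V).

Lemma vcompA a b x : vcomp a (vcomp b x) = vcomp (vcomp a b) x.
Proof. exact: Defs.compA. Qed.

Lemma vcompK p pi x : vcomp p pi = vid V -> vcomp (vcomp x p) pi = x.
Proof. by move=> ppi; rewrite -vcompA ppi compe1. Qed.

Lemma aut_inv_pairC a ai : aut_inv_pair a ai -> aut_inv_pair ai a.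
Proof. by case. Qed.

Lemma aut_inv_pair_uniq a ai ai' :
  aut_inv_pair a ai -> aut_inv_pair a ai' -> ai = ai'.
Proof.
by move=> [_ aia] [aai' _]; rewrite -[ai]compe1 -aai' vcompA aia comp1e.
Qed.

Lemma aut_inv_pairM a ai b bi : aut_inv_pair a ai -> aut_inv_pair b bi ->
  aut_inv_pair (vcomp a b) (vcomp bi ai).
Proof.
move=> [aai aia] [bbi bib]; split; rewrite !vcompA.
- by rewrite (vcompK _ bbi) aai.
- by rewrite (vcompK _ aia) bib.
Qed.

Lemma aut_inv_pair_act s a ai : in_GalK K s ->
  aut_inv_pair a ai -> aut_inv_pair (vact a s) (vact ai s).
Proof. by move=> Gs [aai aia]; split; rewrite -gactM // ?aai ?aia gact1. Qed.

Lemma vact_cancel s s' x : in_GalK K s -> in_GalK K s' ->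
  s' \o s = id -> vact (vact x s) s' = x.
Proof. by move=> Gs Gs' s's; rewrite gactA // s's gact_id. Qed.

Lemma conjE_pair f p pi :
  aut_inv_pair p pi -> conjE f p (vcomp pi (vcomp f p)).
Proof. by exists pi. Qed.

Lemma conjE_aut f p g : conjE f p g -> is_aut p.
Proof. by case=> pi [? _]; exists pi. Qed.

Lemma conjE_fun f p g g' : conjE f p g -> conjE f p g' -> g = g'.
Proof.
move=> [pi [ppi ->]] [pi' [ppi' ->]].
by rewrite (aut_inv_pair_uniq ppi ppi').
Qed.

Lemma conjE_sym f p pi g : aut_inv_pair p pi -> conjE f p g -> conjE g pi f.
Proof.
move=> ppi [pi' [ppi' ->]]; rewrite -(aut_inv_pair_uniq ppi ppi').
case: ppi => pp pip; exists p; split; first exact: aut_inv_pairC.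
by rewrite !vcompA pp comp1e vcompK.
Qed.

Lemma conjE_comp f g h p q :
  conjE f p g -> conjE g q h -> conjE f (vcomp p q) h.
Proof.
move=> [pi [ppi ->]] [qi [qqi ->]]; exists (vcomp qi pi).
by split; [exact: aut_inv_pairM | rewrite !vcompA].
Qed.

Lemma conjE_act s f p g : in_GalK K s ->
  conjE f p g -> conjE (vact f s) (vact p s) (vact g s).
Proof.
move=> Gs [pi [ppi ->]]; exists (vact pi s).
by split; [exact: aut_inv_pair_act | rewrite !gactM].
Qed.

Lemma conjE_injl h h' q x : conjE h q x -> conjE h' q x -> h = h'.
Proof.
move=> hx h'x; have [qi qqi] := conjE_aut hx.
exact: conjE_fun (conjE_sym qqi hx) (conjE_sym qqi h'x).
Qed.

Lemma in_AfE f a : in_Af f a <-> conjE f a f.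
Proof. by split=> [[] | faf] //; split=> //; apply: conjE_aut faf. Qed.

Lemma conjE_coset f p q g :
  conjE f p g -> conjE f q g -> exists a, in_Af f a /\ p = vcomp a q.
Proof.
move=> fpg fqg; have [qi [qqi qiq]] := conjE_aut fqg.
exists (vcomp p qi); split; last by rewrite (vcompK _ qiq).
by apply/in_AfE; apply: conjE_comp fpg (conjE_sym _ fqg).
Qed.

Lemma conjE_AfK f a q g : in_Af f a -> conjE f (vcomp a q) g -> conjE f q g.
Proof.
move=> /in_AfE faf faqg; have [ai aai] := conjE_aut faf.
have := conjE_comp (conjE_sym aai faf) faqg.
by case: aai => _ aia; rewrite vcompA aia comp1e.
Qed.

Lemma in_Af_conj f p pi b : aut_inv_pair p pi ->
  in_Af f b -> in_Af (vcomp pi (vcomp f p)) (vcomp pi (vcomp b p)).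
Proof.
move=> ppi /in_AfE fbf; apply/in_AfE.
have fpfp := conjE_pair f ppi.
rewrite [vcomp pi (vcomp b p)]vcompA.
exact: conjE_comp (conjE_comp (conjE_sym ppi fpfp) fbf) fpfp.
Qed.

Lemma conjK p pi x : aut_inv_pair p pi ->
  vcomp p (vcomp (vcomp pi (vcomp x p)) pi) = x.
Proof. by case=> ppi _; rewrite !vcompA ppi comp1e vcompK. Qed.

Lemma in_Af_conj_iff f p pi b : aut_inv_pair p pi ->
  in_Af f b <-> in_Af (vcomp pi (vcomp f p)) (vcomp pi (vcomp b p)).
Proof.
move=> ppi; split; first exact: in_Af_conj.
by move/(in_Af_conj (aut_inv_pairC ppi)); rewrite !conjK.
Qed.

Lemma in_Af_act s f b : in_GalK K s -> in_Af f b -> in_Af (vact f s) (vact b s).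
Proof. by move=> Gs /in_AfE fbf; apply/in_AfE; apply: conjE_act. Qed.

Lemma in_Af_act_iff f s :
  (forall a s, in_Af f a -> in_GalK K s -> in_Af f (vact a s)) ->
  in_GalK K s -> forall b, in_Af (vact f s) b <-> in_Af f b.
Proof.
move=> Af_stable Gs b; have [s' Gs' [s's ss']] := in_GalK_inv Gs.
split=> fb.
- have := in_Af_act Gs' fb; rewrite vact_cancel // => /Af_stable/(_ Gs).
  by rewrite vact_cancel.
- by have := in_Af_act Gs (Af_stable _ _ fb Gs'); rewrite !vact_cancel.
Qed.

End Conjugation.

Section FieldOfModuli.
Variables (L : fieldType) (K : {pred L}) (V : var_over K) (f : V).
Variable phi : (L -> L) -> V.
Hypothesis phi_conj : forall s, in_GalK K s -> conjE f (phi s) (vact f s).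

Lemma moduli_rep_in_Nf s :
  (forall a s, in_Af f a -> in_GalK K s -> in_Af f (vact a s)) ->
  in_GalK K s -> in_Nf f (phi s).
Proof.
move=> Af_stable Gs; have [pi [ppi fs_eq]] := phi_conj Gs.
exists pi; split=> // a.
apply: iff_trans (in_Af_conj_iff f a ppi) _.
by rewrite -fs_eq; exact: in_Af_act_iff.
Qed.

Lemma moduli_rep_cocycle s t : in_GalK K s -> in_GalK K t ->
  exists a, in_Af f a /\ phi (t \o s) = vcomp a (vcomp (phi t) (vact (phi s) t)).
Proof.
move=> Gs Gt; apply: conjE_coset (phi_conj (in_GalK_comp Gs Gt)) _.
rewrite -gactA //; apply: conjE_comp (phi_conj Gt) _.
exact: conjE_act (phi_conj Gs).
Qed.

Lemma moduli_rep_coboundary_of_descent g h :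
  conjE f g h -> defined_over h ->
  exists d di, aut_inv_pair d di /\ forall s, in_GalK K s ->
    exists a, in_Af f a /\ phi s = vcomp a (vcomp di (vact d s)).
Proof.
move=> fgh h_fixed; have [gi ggi] := conjE_aut fgh.
exists gi, g; split=> [|s Gs]; first exact: aut_inv_pairC.
apply: conjE_coset (phi_conj Gs) (conjE_comp fgh _).
rewrite -(h_fixed s Gs).
exact: conjE_sym (aut_inv_pair_act Gs ggi) (conjE_act Gs fgh).
Qed.

Lemma descent_of_moduli_rep_coboundary d di :
  aut_inv_pair d di ->
  (forall s, in_GalK K s ->
    exists a, in_Af f a /\ phi s = vcomp a (vcomp di (vact d s))) ->
  exists2 h, conjE f di h & defined_over h.
Proof.
move=> ddi phi_cobound; have didd := aut_inv_pairC ddi.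
have fdih := conjE_pair f didd.
exists (vcomp d (vcomp f di)) => // s Gs.
have [a [fa phi_s]] := phi_cobound s Gs.
have f_ds : conjE f (vcomp di (vact d s)) (vact f s).
  by apply: conjE_AfK fa _; rewrite -phi_s; exact: phi_conj.
have h_ds := conjE_comp (conjE_sym didd fdih) f_ds.
rewrite [vcomp d (vcomp di _)]vcompA (proj1 ddi) comp1e in h_ds.
apply: conjE_injl (conjE_sym (aut_inv_pair_act Gs didd) _) h_ds.
exact: conjE_act Gs fdih.
Qed.

End FieldOfModuli.

Theorem proposition10 (L : closedFieldType) (K : {pred L}) (V : var_over K)
  (f : V) (phi : (L -> L) -> V) :
  [pchar L] =i pred0 ->
  is_subfield K ->
  algebraic_over K ->
  (* field of moduli contained in K, phi_s a choice of representative *)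
  (forall s, in_GalK K s -> is_aut (phi s) /\ conjE f (phi s) (vact f s)) ->
  finite_set (in_Af f) ->
  (forall a s, in_Af f a -> in_GalK K s -> in_Af f (vact a s)) ->
  (* (a) *)
  ((forall s, in_GalK K s -> in_Nf f (phi s)) /\
   (forall s t, in_GalK K s -> in_GalK K t ->
      exists a, in_Af f a /\
        phi (t \o s) = vcomp a (vcomp (phi t) (vact (phi s) t)))) /\
  (* (b) *)
  ((exists g h, is_aut g /\ conjE f g h /\ defined_over h) <->
   (exists d di, aut_inv_pair d di /\
      forall s, in_GalK K s ->
        exists a, in_Af f a /\ phi s = vcomp a (vcomp di (vact d s)))).
Proof.
move=> _ _ _ phi_moduli _ Af_stable.
have phi_conj s : in_GalK K s -> conjE f (phi s) (vact f s).
  by move=> Gs; case: (phi_moduli s Gs).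
split; [split|split].
- by move=> s; apply: moduli_rep_in_Nf.
- exact: moduli_rep_cocycle.
- move=> [g [h [_ [fgh h_fixed]]]].
  exact: moduli_rep_coboundary_of_descent fgh h_fixed.
- move=> [d [di [ddi phi_cobound]]].
  have [h fdih h_fixed] := descent_of_moduli_rep_coboundary phi_conj ddi phi_cobound.
  by exists di, h; split; [apply: conjE_aut fdih | split].
Qed.
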